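(* Let $\mathcal C\subseteq 2^{[n]}$ be a $k$-inductively pierced code. Then $\mathcal C$ has a well-formed realization by open balls in $\mathbb R^{k+1}$ with the property that every interval of rank at most $k$ contained in $\mathcal C$ is pierceable at some point.
   Context: A code is a set $\mathcal C\subseteq 2^{[n]}$, $[n]=\{1,\dots,n\}$. Standing conventions: $\emptyset\in\mathcal C$; every neuron lies in some codeword; no two distinct neurons lie in exactly the same codewords. $\mathcal C\setminus i$ is obtained by removing $i$ from every codeword. For $\alpha\subseteq\beta$, $[\alpha,\beta]=\{\gamma:\alpha\subseteq\gamma\subseteq\beta\}$, of rank $|\beta\setminus\alpha|$. A neuron $i$ is a $k$-piercing of $\mathcal C$ if there are $\sigma\subseteq\tau\subseteq[n]\setminus\{i\}$ with $[\sigma,\tau]$ of rank $k$, $[\sigma,\tau]\subseteq\mathcal C\setminus i$, and $\mathcal C=(\mathcal C\setminus i)\cup[\sigma\cup\{i\},\tau\cup\{i\}]$. A code is $k$-inductively pierced if $\mathcal C=\{\emptyset\}$, or some neuron $i$ is a $k'$-piercing for some $k'\le k$ and $\mathcal C\setminus i$ is $k$-inductively pierced. For sets $U_1,\dots,U_n\subseteq\mathbb R^d$, the atom of $\gamma$ is $\bigcap_{i\in\gamma}U_i\setminus\bigcup_{j\notin\gamma}U_j$; the collection realizes $\mathcal C$ if $\mathcal C$ is exactly the set of $\gamma$ with nonempty atom. In a realization of $\mathcal C$, an interval $[\alpha,\beta]\subseteq\mathcal C$ is pierceable at $p$ if $p$ is a limit point of the atom of every codeword in $[\alpha,\beta]$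 and of no other atom. A collection of $(d-1)$-spheres in $\mathbb R^d$ is well-formed if for every $m\le d$ the intersection of any $m$ of them is empty or a $(d-m)$-dimensional sphere, and the intersection of any $d+1$ of them is empty; open balls are well-formed if their boundary spheres are. *)

From HB Require Import structures.
From mathcomp Require Import all_boot all_order all_algebra.
From mathcomp Require Import reals.
Set Implicit Arguments. Unset Strict Implicit. Unset Printing Implicit Defensive.
Import Order.TTheory GRing.Theory Num.Theory.
Local Open Scope ring_scope.

Definition code_conventions (n : nat) (C : {set {set 'I_n}}) : Prop :=
  [/\ set0 \in C,
      (forall i : 'I_n, exists2 c, c \in C & i \in c)
    & (forall i j : 'I_n, (forall c, c \in C -> (i \in c) = (j \in c)) -> i = j)].

Definition del_neuron (n : nat) (C : {set {set 'I_n}}) (i : 'I_n) :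
  {set {set 'I_n}} := [set c :\ i | c in C].

Definition interval_sets (n : nat) (a b : {set 'I_n}) : {set {set 'I_n}} :=
  [set g : {set 'I_n} | (a \subset g) && (g \subset b)].

Definition is_piercing (n : nat) (C : {set {set 'I_n}}) (i : 'I_n) (k : nat)
  : Prop :=
  exists s t : {set 'I_n},
    [/\ s \subset t, i \notin t, #|t :\: s| = k,
        interval_sets s t \subset del_neuron C i
      & C = del_neuron C i :|: interval_sets (i |: s) (i |: t)].

Inductive k_ind_pierced (n k : nat) : {set {set 'I_n}} -> Prop :=
| kip_trivial : k_ind_pierced k [set set0]
| kip_step (C : {set {set 'I_n}}) (i : 'I_n) (k' : nat) :
    (k' <= k)%N -> is_piercing C i k' ->
    k_ind_pierced k (del_neuron C i) -> k_ind_pierced k C.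

Definition sqdist (R : realType) (d : nat) (x y : 'rV[R]_d) : R :=
  \sum_(j < d) (x 0 j - y 0 j) ^+ 2.

(* open ball with center c and radius r (r > 0 required separately) *)
Definition open_ball (R : realType) (d : nat) (c : 'rV[R]_d) (r : R)
  : 'rV[R]_d -> Prop := fun x => sqdist x c < r ^+ 2.

Definition bsphere (R : realType) (d : nat) (c : 'rV[R]_d) (r : R)
  : 'rV[R]_d -> Prop := fun x => sqdist x c = r ^+ 2.

Definition is_dim_sphere (R : realType) (d j : nat) (S : 'rV[R]_d -> Prop)
  : Prop :=
  exists (c : 'rV[R]_d) (r : R) (V : {vspace 'rV[R]_d}),
    [/\ 0 < r, \dim V = j.+1
      & forall x, S x <-> (x - c \in V /\ sqdist x c = r ^+ 2)].

Definition well_formed_balls (R : realType) (d n : nat)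
  (c : 'I_n -> 'rV[R]_d) (r : 'I_n -> R) : Prop :=
  (forall S : {set 'I_n}, (1 <= #|S| <= d)%N ->
     let I := fun x => forall i, i \in S -> bsphere (c i) (r i) x in
     (forall x, ~ I x) \/ is_dim_sphere (d - #|S|) I)
  /\ (forall S : {set 'I_n}, #|S| = d.+1 ->
       forall x, ~ (forall i, i \in S -> bsphere (c i) (r i) x)).

Definition atom (R : realType) (d n : nat) (U : 'I_n -> 'rV[R]_d -> Prop)
  (g : {set 'I_n}) : 'rV[R]_d -> Prop :=
  fun x => (forall i, i \in g -> U i x) /\ (forall j, j \notin g -> ~ U j x).

Definition realizes (R : realType) (d n : nat) (U : 'I_n -> 'rV[R]_d -> Prop)
  (C : {set {set 'I_n}}) : Prop :=
  forall g : {set 'I_n}, (exists x, atom U g x) <-> g \in C.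

Definition limit_point (R : realType) (d : nat) (A : 'rV[R]_d -> Prop)
  (p : 'rV[R]_d) : Prop :=
  forall e : R, 0 < e -> exists x, [/\ A x, x != p & sqdist x p < e ^+ 2].

Definition pierceable_at (R : realType) (d n : nat)
  (U : 'I_n -> 'rV[R]_d -> Prop) (a b : {set 'I_n}) (p : 'rV[R]_d) : Prop :=
  forall g : {set 'I_n}, limit_point (atom U g) p <-> g \in interval_sets a b.

From HB Require Import structures.
From mathcomp Require Import all_boot all_order all_algebra.
From mathcomp Require Import reals ring lra.
Set Implicit Arguments. Unset Strict Implicit. Unset Printing Implicit Defensive.
Import Order.TTheory GRing.Theory Num.Theory.
Local Open Scope ring_scope.

(* Induction along the piercing sequence, keeping a realization by balls in
   R^(k+1) in which every interval [a, b] of rank at most k inside the code has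
   a pierce point: a point on the spheres of b \ a, where these meet
   transversally, lying inside the balls of a and strictly outside all others.
   To add a neuron i piercing [s, t], place a ball of small radius e around a
   pierce point p of [s, t].  Near p only the atoms of [s, t] occur, and p is a
   limit point of each of them, so the new ball realizes the pierced code.  Its
   sphere cuts the spheres through p transversally, keeping the arrangement
   well formed.  Moving p by a small step with prescribed components along the
   normals of these spheres (independence lets us prescribe them), into the new
   ball or onto its sphere, yields pierce points for the new intervals, while
   the old intervals keep pierce points away from p. *)

Section SmallPositive.
Variable R : realType.

Definition small (P : R -> Prop) : Prop :=
  exists2 E, 0 < E & forall e, 0 < e -> e < E -> P e.

Lemma pos_lower_bound (I : finType) (E : I -> R) :
  (forall i, 0 < E i) -> exists2 m, 0 < m & forall i, m <= E i.
Proof.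
move=> E0; suff [m m0 hm] : exists2 m, 0 < m & forall i, i \in enum I -> m <= E i.
  by exists m => // i; apply: hm; rewrite mem_enum.
elim: (enum I) => [|j s [m m0 hm]]; first by exists 1.
exists (Num.min m (E j)); first by rewrite lt_min m0 E0.
move=> i /predU1P [->|/hm mi]; first by rewrite ge_min lexx orbT.
by rewrite ge_min mi.
Qed.

Lemma small_all (I : finType) (P : I -> R -> Prop) :
  (forall i, small (P i)) -> small (fun e => forall i, P i e).
Proof.
case/fin_all_exists2 => E E0 hE; have [m m0 hm] := pos_lower_bound E0.
by exists m => // e e0 em i; apply: hE => //; apply: lt_le_trans em (hm i).
Qed.

Lemma small_and (P Q : R -> Prop) :
  small P -> small Q -> small (fun e => P e /\ Q e).
Proof.
move=> [E E0 hP] [F F0 hQ]; exists (Num.min E F); first by rewrite lt_min E0.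
by move=> e e0; rewrite lt_min => /andP [eE eF]; split; [apply: hP | apply: hQ].
Qed.

Lemma small_exists (P : R -> Prop) : small P -> exists2 e, 0 < e & P e.
Proof.
move=> [E E0 hP]; exists (E / 2); first by rewrite divr_gt0.
by apply: hP; rewrite ?divr_gt0 // ltr_pdivrMr //; lra.
Qed.

Lemma small_impl (P Q : R -> Prop) :
  small P -> (forall e, 0 < e -> P e -> Q e) -> small Q.
Proof. by move=> [E E0 hP] hPQ; exists E => // e e0 eE; apply/hPQ/hP. Qed.

Lemma small_if (b : bool) (P : R -> Prop) :
  (b -> small P) -> small (fun e => b -> P e).
Proof.
case: b => [/(_ isT) [E E0 hP]|_]; first by exists E => // e e0 eE _; apply: hP.
by exists 1.
Qed.

Lemma small_lt (m : R) : 0 < m -> small (fun u => u < m).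
Proof. by move=> m0; exists m. Qed.

(* A statement about squared radii [u] becomes one about radii [e]. *)
Lemma small_sqr (P : R -> Prop) :
  small P -> small (fun e => forall u, 0 < u -> u <= e ^+ 2 -> P u).
Proof.
move=> [E E0 hP]; exists (Num.min 1 E); first by rewrite lt_min ltr01.
move=> e e0; rewrite lt_min => /andP [e1 eE] u u0 ue; apply: hP => //.
by apply: le_lt_trans ue _; apply: le_lt_trans eE; rewrite expr2 ger_pMr // ltW.
Qed.

Lemma small_sqr_lt (m : R) : 0 < m -> small (fun e => e ^+ 2 < m).
Proof.
move=> m0; apply: (small_impl (small_sqr (small_lt m0))) => e e0.
by apply; rewrite ?exprn_gt0.
Qed.

End SmallPositive.

Section Euclid.
Variables (R : realType) (d : nat).
Implicit Types (x y z p q u v w : 'rV[R]_d).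

Definition dot x y : R := \sum_(j < d) x 0 j * y 0 j.

Lemma dotC x y : dot x y = dot y x.
Proof. by apply: eq_bigr => j _; rewrite mulrC. Qed.

Lemma dotDl x y z : dot (x + y) z = dot x z + dot y z.
Proof. by rewrite /dot -big_split; apply: eq_bigr => j _; rewrite mxE mulrDl. Qed.

Lemma dotNl x z : dot (- x) z = - dot x z.
Proof. by rewrite /dot -sumrN; apply: eq_bigr => j _; rewrite mxE mulNr. Qed.

Lemma dotZl a x z : dot (a *: x) z = a * dot x z.
Proof. by rewrite /dot mulr_sumr; apply: eq_bigr => j _; rewrite mxE mulrA. Qed.

Lemma dotBl x y z : dot (x - y) z = dot x z - dot y z.
Proof. by rewrite dotDl dotNl. Qed.

Lemma dotDr x y z : dot z (x + y) = dot z x + dot z y.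
Proof. by rewrite dotC dotDl !(dotC z). Qed.

Lemma dotNr x z : dot z (- x) = - dot z x.
Proof. by rewrite dotC dotNl dotC. Qed.

Lemma dotZr a x z : dot z (a *: x) = a * dot z x.
Proof. by rewrite dotC dotZl dotC. Qed.

Lemma dot_ge0 x : 0 <= dot x x.
Proof. by apply: sumr_ge0 => j _; rewrite -expr2 sqr_ge0. Qed.

Lemma dot_gt0 x : x != 0 -> 0 < dot x x.
Proof.
move=> nx; rewrite lt_def dot_ge0 andbT; apply: contra nx => /eqP xx0.
apply/eqP/rowP => j; rewrite mxE; apply/eqP; rewrite -[_ == 0]orbb -mulf_eq0.
by move/psumr_eq0P: xx0 => -> // l _; rewrite -expr2 sqr_ge0.
Qed.

Lemma sqdistE x y : sqdist x y = dot (x - y) (x - y).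
Proof. by apply: eq_bigr => j _; rewrite !mxE expr2. Qed.

Lemma sqdist_ge0 x y : 0 <= sqdist x y.
Proof. by rewrite sqdistE dot_ge0. Qed.

Lemma sqdistxx x : sqdist x x = 0.
Proof. by rewrite sqdistE subrr /dot big1 // => j _; rewrite mxE mul0r. Qed.

Lemma sqdistC x y : sqdist x y = sqdist y x.
Proof. by rewrite !sqdistE -opprB dotNl dotNr opprK. Qed.

Lemma sqdist_gt0 x y : x != y -> 0 < sqdist x y.
Proof. by move=> xy; rewrite sqdistE dot_gt0 // subr_eq0. Qed.

Lemma sqdist_shift x y z :
  sqdist x z = sqdist x y + 2 * dot (x - y) (y - z) + sqdist y z.
Proof.
rewrite !sqdistE; have -> : x - z = (x - y) + (y - z) by rewrite addrA subrK.
by move: (x - y) (y - z) => a b; rewrite !dotDl !dotDr (dotC b a); ring.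
Qed.

Lemma sqdist_addl p y z : sqdist (p + y) z = sqdist p z + 2 * dot (p - z) y + dot y y.
Proof.
rewrite !sqdistE addrAC; move: (p - z) => u.
by rewrite dotDl !dotDr (dotC y u); ring.
Qed.

(* From (a + b)^2 + (l a - b)^2 / l = (1 + l) a^2 + (1 + 1/l) b^2. *)
Lemma sqdist_tri x y z l : 0 < l ->
  sqdist x z <= (1 + l) * sqdist x y + (1 + l^-1) * sqdist y z.
Proof.
move=> l0; rewrite /sqdist !mulr_sumr -big_split /=; apply: ler_sum => j _.
have -> : x 0 j - z 0 j = (x 0 j - y 0 j) + (y 0 j - z 0 j) by rewrite addrA subrK.
move: (x 0 j - y 0 j) (y 0 j - z 0 j) => a b.
have -> : (1 + l) * a ^+ 2 + (1 + l^-1) * b ^+ 2 = (a + b) ^+ 2 + (l * a - b) ^+ 2 / l.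
  by field; rewrite gt_eqF.
by rewrite lerDl divr_ge0 ?sqr_ge0 ?ltW.
Qed.

Lemma open_ball0 x y : ~ open_ball y 0 x.
Proof. by rewrite /open_ball expr0n /= ltNge sqdist_ge0. Qed.

Definition near p (P : 'rV[R]_d -> Prop) : Prop :=
  exists2 D, 0 < D & forall x, sqdist x p < D -> P x.

Lemma near_refl p P : near p P -> P p.
Proof. by move=> [D D0 hP]; apply: hP; rewrite sqdistxx. Qed.

Lemma near_impl p (P Q : 'rV[R]_d -> Prop) :
  near p P -> (forall x, P x -> Q x) -> near p Q.
Proof. by move=> [D D0 hP] hPQ; exists D => // x /hP /hPQ. Qed.

Lemma near_if (b : bool) p P : (b -> near p P) -> near p (fun x => b -> P x).
Proof.
case: b => [/(_ isT) [D D0 hP] | _]; first by exists D => // x /hP.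
by exists 1.
Qed.

Lemma near_and p P Q : near p P -> near p Q -> near p (fun x => P x /\ Q x).
Proof.
move=> [D D0 hP] [E E0 hQ]; exists (Num.min D E); first by rewrite lt_min D0.
by move=> x; rewrite lt_min => /andP [xD xE]; split; [apply: hP | apply: hQ].
Qed.

Lemma near_all (I : finType) p (P : I -> 'rV[R]_d -> Prop) :
  (forall i, near p (P i)) -> near p (fun x => forall i, P i x).
Proof.
case/fin_all_exists2 => D D0 hD; have [m m0 hm] := pos_lower_bound D0.
by exists m => // x xm i; apply: hD; apply: lt_le_trans xm (hm i).
Qed.

Lemma near_small p P : near p P -> small (fun e => forall x, sqdist x p <= e ^+ 2 -> P x).
Proof.
move=> [D D0 hP]; apply: (small_impl (small_sqr_lt D0)) => e _ eD x xp.
by apply: hP; apply: le_lt_trans eD.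
Qed.

Lemma near_shift p q (P : 'rV[R]_d -> Prop) D :
  (forall x, sqdist x p < D -> P x) -> sqdist q p < D / 4 -> near q P.
Proof.
move=> hP qp; have D0 : 0 < D by have := sqdist_ge0 q p; lra.
exists (D / 4) => [|x xq]; first by rewrite divr_gt0.
apply: hP; have := @sqdist_tri x q p 1 ltr01; rewrite invr1; lra.
Qed.

Lemma near_sqdist_lt q z M : sqdist q z < M -> near q (fun x => sqdist x z < M).
Proof.
move=> qz; set m := sqdist q z in qz; have m0 : 0 <= m by apply: sqdist_ge0.
set l := (M - m) / (2 * (m + 1)); have l0 : 0 < l by rewrite divr_gt0 //; lra.
have lm : l * m <= (M - m) / 2.
  rewrite /l mulrAC ler_pdivrMr; last lra.
  have -> : (M - m) / 2 * (2 * (m + 1)) = (M - m) * (m + 1) by field.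
  nra.
have li0 : 0 < 1 + l^-1 by rewrite ltr_wpDr // invr_ge0 ltW.
exists ((M - (1 + l) * m) / (1 + l^-1)) => [|x xq].
  by rewrite divr_gt0 // subr_gt0; lra.
have := @sqdist_tri x q z l^-1; rewrite invrK invr_gt0 => /(_ l0).
by move: xq; rewrite ltr_pdivlMr // -/m; lra.
Qed.

Lemma near_sqdist_gt q z M : 0 <= M -> M < sqdist q z ->
  near q (fun x => M < sqdist x z).
Proof.
move=> M0 Mq; set m := sqdist q z in Mq.
set l := (M + 1) / (m - M); have l0 : 0 < l by rewrite divr_gt0 //; lra.
have Ml : M * (1 + l^-1) < m.
  have -> : M * (1 + l^-1) = M * (m + 1) / (M + 1) by rewrite /l invf_div; field; lra.
  by rewrite ltr_pdivrMr; nra.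
have li0 : 0 < 1 + l^-1 by rewrite ltr_wpDr // invr_ge0 ltW.
exists ((m - M * (1 + l^-1)) / (1 + l)) => [|x xq].
  by rewrite divr_gt0 ?subr_gt0 //; lra.
have := @sqdist_tri q x z l l0; rewrite -/m sqdistC.
move: xq; rewrite ltr_pdivlMr; last lra.
move=> xq mle; rewrite -(ltr_pM2l li0) mulrC; lra.
Qed.

End Euclid.

Section LinearIndependence.
Variables (R : realType) (d n : nat).
Implicit Types (u : 'I_n -> 'rV[R]_d) (T : {set 'I_n}) (v w y : 'rV[R]_d).

(* Linear independence of the family [(u j)_(j in T)], phrased as
   surjectivity of [w |-> (dot w (u j))_(j in T)]. *)
Definition lin_indep u T : Prop :=
  forall beta : 'I_n -> R, exists w, forall j, j \in T -> dot w (u j) = beta j.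

Lemma lin_indepS u T T' : T' \subset T -> lin_indep u T -> lin_indep u T'.
Proof.
by move=> sT hu beta; have [w hw] := hu beta; exists w => j /(subsetP sT) /hw.
Qed.

Lemma exists_orthogonal u T : (#|T| < d)%N ->
  exists2 v, v != 0 & forall j, j \in T -> dot v (u j) = 0.
Proof.
move=> Td; pose A : 'M[R]_(d, #|T|) := \matrix_(a, l) u (enum_val l) 0 a.
have dotA v l : (v *m A) 0 l = dot v (u (enum_val l)).
  by rewrite mxE; apply: eq_bigr => a _; rewrite mxE.
have : kermx A != 0.
  rewrite -mxrank_eq0 mxrank_ker subn_eq0 -ltnNge.
  exact: leq_ltn_trans (rank_leq_col A) Td.
case/rowV0Pn => v /sub_kermxP vA v0; exists v => // j jT.
by rewrite -(enum_rankK_in jT jT) -dotA vA mxE.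
Qed.

Lemma lin_indep_perp u T v : lin_indep u T -> v != 0 ->
  (forall j, j \in T -> dot v (u j) = 0) ->
  forall beta, exists2 w, dot w v = 0 & forall j, j \in T -> dot w (u j) = beta j.
Proof.
move=> hu v0 vu beta; have [w hw] := hu beta.
exists (w - (dot w v / dot v v) *: v).
  by rewrite dotBl dotZl mulfVK ?subrr // gt_eqF // dot_gt0.
by move=> j jT; rewrite dotBl dotZl vu // mulr0 subr0 hw.
Qed.

Lemma lin_indep_extend u T v y : lin_indep u T ->
  (forall j, j \in T -> dot v (u j) = 0) -> dot v y != 0 ->
  forall beta bi, exists w,
    (forall j, j \in T -> dot w (u j + y) = beta j) /\ dot w y = bi.
Proof.
move=> hu vu vy beta bi; have [w hw] := hu (fun j => beta j - bi).
pose lam := (bi - dot w y) / dot v y.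
have wy : dot (w + lam *: v) y = bi by rewrite dotDl dotZl mulfVK // subrKC.
exists (w + lam *: v); split => // j jT.
by rewrite dotDr wy dotDl dotZl vu // mulr0 addr0 hw // subrK.
Qed.

(* [y = t/2 w0 + sig v] with [sig > 0] chosen so that [|y|^2 = t]. *)
Lemma exists_displacement v w0 (t : R) : v != 0 -> dot w0 v = 0 ->
  0 < t -> t * dot w0 w0 < 4 ->
  exists y, [/\ dot y y = t, dot v y != 0 &
    forall z, dot z v = 0 -> dot z y = t / 2 * dot z w0].
Proof.
move=> v0 w0v t0 tW; have vv := dot_gt0 v0; set W := dot w0 w0 in tW.
have sig0 : 0 < (t - t ^+ 2 / 4 * W) / dot v v by apply: divr_gt0 => //; nra.
pose sig := Num.sqrt ((t - t ^+ 2 / 4 * W) / dot v v).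
have sig2 : sig ^+ 2 = (t - t ^+ 2 / 4 * W) / dot v v by rewrite sqr_sqrtr // ltW.
have sigv : 0 < sig by rewrite sqrtr_gt0.
exists (t / 2 *: w0 + sig *: v); split.
- rewrite !(dotDl, dotDr, dotZl, dotZr) w0v (dotC v w0) w0v -/W !mulr0 addr0 add0r.
  by rewrite (mulrA sig) -(expr2 sig) sig2 mulfVK ?gt_eqF //; field.
- by rewrite dotDr !dotZr (dotC v w0) w0v mulr0 add0r mulf_neq0 // gt_eqF.
- by move=> z zv; rewrite dotDr !dotZr zv mulr0 addr0.
Qed.

End LinearIndependence.

Section SphereCut.
Variables (R : realType) (d : nat).

Lemma is_dim_sphere_ext m (S1 S2 : 'rV[R]_d -> Prop) :
  (forall x, S1 x <-> S2 x) -> is_dim_sphere m S1 -> is_dim_sphere m S2.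
Proof.
by move=> h [c [r [V [r0 dV hS]]]]; exists c, r, V; split => // x; rewrite -h.
Qed.

Definition orth_form (u : 'rV[R]_d) : 'Hom('rV[R]_d, 'rV[R]_1) :=
  linfun (mulmxr u^T).

Lemma orth_form_eq0 u x : (orth_form u x == 0) = (dot x u == 0).
Proof.
rewrite lfunE /= [x *m u^T]mx11_scalar.
have -> : (x *m u^T) 0 0 = dot x u by rewrite mxE; apply: eq_bigr => j _; rewrite mxE.
by rewrite -scalemx1 scalemx_eq0 oner_eq0 orbF.
Qed.

Lemma dim_orth_cap (V : {vspace 'rV[R]_d}) u : u \in V -> dot u u != 0 ->
  \dim (V :&: lker (orth_form u)) = (\dim V).-1.
Proof.
move=> uV uu; have := limg_ker_dim (orth_form u) V.
suff -> : \dim (orth_form u @: V) = 1%N by rewrite addn1 => <-.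
apply/eqP; rewrite eqn_leq; apply/andP; split.
  by have := dimvS (subvf (orth_form u @: V)%VS); rewrite dimvf /dim /= mul1n.
rewrite lt0n dimv_eq0; apply: contra uu => /eqP V0.
by have := memv_img (orth_form u) uV; rewrite V0 memv0 orth_form_eq0.
Qed.

(* A small sphere around a point [p] of an [(m+1)]-sphere [S] cuts [S] in an
   [m]-sphere, lying in the hyperplane of [S]'s span orthogonal to [p - c0]. *)
Lemma sphere_cut m (S : 'rV[R]_d -> Prop) p : is_dim_sphere m.+1 S -> S p ->
  small (fun e => is_dim_sphere m (fun x => S x /\ sqdist x p = e ^+ 2)).
Proof.
move=> [c0 [rho [V [rho0 dV hS]]]] Sp; have [pV pc0] := (hS p).1 Sp.
set u := p - c0 in pV; have uu : dot u u = rho ^+ 2 by rewrite -sqdistE.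
have rr : 0 < rho ^+ 2 by rewrite exprn_gt0.
have rr4 : 0 < 4 * rho ^+ 2 by rewrite mulr_gt0.
apply: (small_impl (small_sqr_lt rr4)) => e e0 eE.
set H := rho ^+ 2 - e ^+ 2 / 2; set lam := H / rho ^+ 2.
have lr : lam * rho ^+ 2 = H by rewrite mulfVK // gt_eqF.
have rad0 : 0 < rho ^+ 2 - H ^+ 2 / rho ^+ 2.
  rewrite subr_gt0 ltr_pdivrMr // -expr2 /H; have := exprn_gt0 2 e0; nra.
exists (c0 + lam *: u), (Num.sqrt (rho ^+ 2 - H ^+ 2 / rho ^+ 2)),
  (V :&: lker (orth_form u))%VS; split.
- by rewrite sqrtr_gt0.
- by rewrite dim_orth_cap ?dV // uu gt_eqF.
move=> x; rewrite sqr_sqrtr ?ltW // hS memv_cap memv_ker orth_form_eq0.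
have xp : sqdist x p = sqdist x c0 - 2 * dot (x - c0) u + rho ^+ 2.
  rewrite (sqdist_shift x c0 p) (sqdistC c0 p) pc0.
  have -> : c0 - p = - u by rewrite opprB.
  by rewrite dotNr; ring.
have xc : sqdist x (c0 + lam *: u) =
    sqdist x c0 - 2 * lam * dot (x - c0) u + lam ^+ 2 * rho ^+ 2.
  rewrite (sqdist_shift x c0) [sqdist c0 _]sqdistE.
  have -> : c0 - (c0 + lam *: u) = - (lam *: u) by rewrite opprD addrA subrr add0r.
  by rewrite dotNl !dotNr opprK !(dotZl, dotZr) uu; ring.
have xcu : dot (x - (c0 + lam *: u)) u = dot (x - c0) u - H.
  by rewrite opprD addrA (dotBl (x - c0)) dotZl uu lr.
have xV : (x - (c0 + lam *: u) \in V) = (x - c0 \in V).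
  rewrite opprD addrA; apply/idP/idP => h; last by rewrite rpredB // rpredZ.
  by rewrite -[x - c0](subrK (lam *: u)) rpredD // rpredZ.
set K := H ^+ 2 / rho ^+ 2 in rad0 *.
have lamH : lam * H = K by rewrite /lam mulrAC -expr2.
have lam2 : lam ^+ 2 * rho ^+ 2 = K by rewrite -lamH -lr expr2 mulrA.
rewrite xV xp xc xcu subr_eq0 -mulrA lam2.
split => [[[xc0 xr] xpe]|[/andP [xc0 /eqP xu] xr]].
  have xu : dot (x - c0) u = H by rewrite /H; lra.
  by rewrite xu lamH eqxx xr andbT; split => //; lra.
have xr' : sqdist x c0 = rho ^+ 2 by move: xr; rewrite xu lamH; lra.
by split; [split | rewrite xr' xu /H; lra].
Qed.

End SphereCut.

Section PiercePoints.
Variables (R : realType) (n d : nat).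
Implicit Types (c : 'I_n -> 'rV[R]_d) (r : 'I_n -> R) (p q x : 'rV[R]_d).
Implicit Types (A T J K a b g : {set 'I_n}).

Local Notation balls c r := (fun j => open_ball (c j) (r j)).

Definition pierce_point c r p A T : Prop :=
  [/\ (#|T| < d)%N,
      forall j, j \in T -> 0 < r j /\ sqdist p (c j) = r j ^+ 2,
      near p (fun x => (forall j, j \in A -> open_ball (c j) (r j) x) /\
        forall j, j \notin A -> j \notin T -> r j = 0 \/ r j ^+ 2 < sqdist x (c j))
    & lin_indep (fun j => p - c j) T].

Lemma not_open_ball c r j x :
  r j = 0 \/ r j ^+ 2 < sqdist x (c j) -> ~ open_ball (c j) (r j) x.
Proof.
move=> [-> | rx]; first exact: open_ball0.
by rewrite /open_ball => xr; have := lt_trans rx xr; rewrite ltxx.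
Qed.

Lemma pierce_point_atom c r q A T : pierce_point c r q A T -> atom (balls c r) A q.
Proof.
move=> [_ onT /near_refl [qA qO] _]; split=> // j jA.
have [jT | /(qO j jA)] := boolP (j \in T); last exact: not_open_ball.
by rewrite /open_ball (onT j jT).2 ltxx.
Qed.

Lemma pierce_point_near_atom c r p a b : a \subset b ->
  pierce_point c r p a (b :\: a) ->
  near p (fun x => forall g, atom (balls c r) g x -> g \in interval_sets a b).
Proof.
move=> ab [_ _ hnear _]; apply: (near_impl hnear) => x [xa xO] g [xg xng].
rewrite inE; apply/andP; split; apply/subsetP => j.
  by move=> ja; apply/negPn/negP => /xng; apply; apply: xa.
move=> jg; apply/negPn/negP => jb.
have ja : j \notin a by apply: contra jb; apply: (subsetP ab).
by apply: not_open_ball (xO j ja _) (xg j jg); rewrite inE (negbTE jb) andbF.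
Qed.

Lemma pierce_point_near_sphere c r p A T : pierce_point c r p A T ->
  near p (fun x => forall j, 0 < r j -> sqdist x (c j) = r j ^+ 2 -> j \in T).
Proof.
move=> [_ _ hnear _]; apply: (near_impl hnear) => x [xA xO] j rj xj.
apply/negPn/negP => jT; have [jA | jA] := boolP (j \in A).
  by have := xA j jA; rewrite /open_ball xj ltxx.
by case: (xO j jA jT) => [r0 | ]; [move: rj; rewrite r0 ltxx | rewrite xj ltxx].
Qed.

Lemma near_strict c r q (I O : {set 'I_n}) :
  (forall j, j \in I -> sqdist q (c j) < r j ^+ 2) ->
  (forall j, j \in O -> r j ^+ 2 < sqdist q (c j)) ->
  near q (fun x => (forall j, j \in I -> sqdist x (c j) < r j ^+ 2) /\
    forall j, j \in O -> r j ^+ 2 < sqdist x (c j)).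
Proof.
move=> qI qO; apply: near_and; apply: near_all => j; apply: near_if => jS.
  exact: near_sqdist_lt (qI j jS).
exact: near_sqdist_gt (sqr_ge0 _) (qO j jS).
Qed.

(* Move [p] by [y = t/2 w0 + sig v], with [v] tangent to all spheres of [T]
   and [w0] orthogonal to [v] with normal components [b0] (by independence).
   This changes [sqdist - r ^+ 2] at sphere [j] by [t (1 + b0 j)]: [q] stays on
   the spheres of [J], enters those of [K] and leaves the other ones of [T],
   while the tangential part keeps [q - p] independent of the normals at [q]. *)
Lemma pierce_point_move c r p A T J K :
  pierce_point c r p A T -> J \subset T -> K \subset T -> [disjoint J & K] ->
  small (fun t => exists q, [/\ sqdist q p = t, pierce_point c r q (A :|: K) J &
    forall beta bi, exists w,
      (forall j, j \in J -> dot w (q - c j) = beta j) /\ dot w (q - p) = bi]).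
Proof.
move=> [Td onT [D D0 hD] indT] JT KT JK.
have [v v0 vT] := exists_orthogonal (fun j => p - c j) Td.
pose b0 j : R := if j \in J then -1 else if j \in K then -2 else 0.
have [w0 w0v w0T] := lin_indep_perp indT v0 vT b0.
have W0 : 0 < 4 / (dot w0 w0 + 1).
  by apply: divr_gt0 => //; have := dot_ge0 w0; lra.
have D4 : 0 < D / 4 by rewrite divr_gt0.
apply: (small_impl (small_and (small_lt D4) (small_lt W0))) => t t0 [tD tW].
have tW' : t * dot w0 w0 < 4.
  by move: tW; rewrite ltr_pdivlMr; have := dot_ge0 w0; nra.
have [y [yy vy yT]] := exists_displacement v0 w0v t0 tW'.
have on_q j : j \in T -> sqdist (p + y) (c j) = r j ^+ 2 + t * (1 + b0 j).
  move=> jT; have vj : dot (p - c j) v = 0 by rewrite dotC vT.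
  by rewrite sqdist_addl (onT j jT).2 (yT _ vj) yy dotC w0T //; field.
have ext beta bi : exists w,
    (forall j, j \in J -> dot w (p + y - c j) = beta j) /\ dot w (p + y - p) = bi.
  have vJ j : j \in J -> dot v (p - c j) = 0 by move/(subsetP JT); apply: vT.
  have [w [wJ wy]] := lin_indep_extend (lin_indepS JT indT) vJ vy beta bi.
  by exists w; split=> [j jJ|]; rewrite addrAC ?wJ // subrr add0r.
have qp : sqdist (p + y) p < D / 4 by rewrite sqdistE addrAC subrr add0r yy.
have inK j : j \in K -> sqdist (p + y) (c j) < r j ^+ 2.
  by move=> jK; rewrite on_q ?(subsetP KT) // /b0 (disjointFl JK jK) jK; lra.
have outT j : j \in T :\: (J :|: K) -> r j ^+ 2 < sqdist (p + y) (c j).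
  rewrite !inE negb_or => /andP [/andP [jJ jK] jT].
  by rewrite on_q // /b0 (negbTE jJ) (negbTE jK); lra.
exists (p + y); split; first by rewrite sqdistE addrAC subrr add0r yy.
  split.
  - exact: leq_ltn_trans (subset_leq_card JT) Td.
  - move=> j jJ; have jT := subsetP JT j jJ.
    by split; [exact: (onT j jT).1 | rewrite on_q // /b0 jJ; ring].
  - apply: (near_impl (near_and (near_shift hD qp) (near_strict inK outT))).
    move=> x [[xA xO] [xK xT]]; split=> j; rewrite inE ?negb_or.
      by case/orP => [/xA | /xK].
    case/andP=> jA jK jJ; have [jT | /(xO j jA)] := boolP (j \in T) => //.
    by right; apply: xT; rewrite !inE negb_or jJ jK jT.
  - by move=> beta; have [w [wJ _]] := ext beta 0; exists w.
exact: ext.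
Qed.

Lemma pierce_point_pierceable c r p a b : a \subset b ->
  pierce_point c r p a (b :\: a) -> pierceable_at (balls c r) a b p.
Proof.
move=> ab pp g; split=> [lp | ].
  have [D D0 hD] := pierce_point_near_atom ab pp.
  have sD : 0 < Num.sqrt D by rewrite sqrtr_gt0.
  have [x [gx _ xp]] := lp _ sD.
  by apply: (hD x) gx; rewrite -(sqr_sqrtr (ltW D0)).
rewrite inE => /andP [ag gb] e e0.
have gab : g :\: a \subset b :\: a by apply: setSD.
have JK : [disjoint set0 & g :\: a] by rewrite -setI_eq0 set0I.
have e2 : 0 < e ^+ 2 by rewrite exprn_gt0.
have [t t0 [[q [qp qpp _]] te]] :=
  small_exists (small_and (pierce_point_move pp (sub0set _) gab JK) (small_lt e2)).
exists q; split; last by rewrite qp.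
  by have := pierce_point_atom qpp; rewrite -{1}(setIidPr ag) setID.
by apply: contraTneq t0 => qp0; rewrite -qp qp0 sqdistxx ltxx.
Qed.

Lemma pierce_point_avoid c r q A T p : pierce_point c r q A T ->
  exists2 q', pierce_point c r q' A T & q' != p.
Proof.
move=> pq; have [<- | ] := eqVneq q p; last by exists q.
have JK : [disjoint T & set0] by rewrite -setI_eq0 setI0.
have [t t0 [q' [q'q pq' _]]] :=
  small_exists (pierce_point_move pq (subxx T) (sub0set T) JK).
exists q'; first by rewrite setU0 in pq'.
by apply: contraTneq t0 => qq; rewrite -q'q qq sqdistxx ltxx.
Qed.

End PiercePoints.

Section AddBall.
Variables (R : realType) (n d : nat) (c : 'I_n -> 'rV[R]_d) (r : 'I_n -> R).
Variables (i : 'I_n) (p : 'rV[R]_d) (e : R).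
Implicit Types (q x : 'rV[R]_d) (A T : {set 'I_n}).

Local Notation c' := [eta c with i |-> p].
Local Notation r' := [eta r with i |-> e].

Lemma pierce_point_out q A T : pierce_point c r q A T -> i \notin A -> i \notin T ->
  e ^+ 2 < sqdist q p -> pierce_point c' r' q A T.
Proof.
move=> [Td onT hnear indT] iA iT qp.
have Ti j : j \in T -> (j == i) = false by move=> jT; apply/eqP => ji; rewrite -ji jT in iT.
split=> //.
- by move=> j jT /=; rewrite Ti //; apply: onT.
- apply: (near_impl (near_and hnear (near_sqdist_gt (sqr_ge0 e) qp))) => x [[xA xO] xi].
  split=> j /=; case: eqP => [->|_]; by [rewrite (negbTE iA) | apply: xA | right | apply: xO].
- by move=> beta; have [w hw] := indT beta; exists w => j jT /=; rewrite Ti ?hw.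
Qed.

Lemma pierce_point_in q A T : pierce_point c r q A T -> i \notin A -> i \notin T ->
  sqdist q p < e ^+ 2 -> pierce_point c' r' q (i |: A) T.
Proof.
move=> [Td onT hnear indT] iA iT qp.
have Ti j : j \in T -> (j == i) = false by move=> jT; apply/eqP => ji; rewrite -ji jT in iT.
split=> //.
- by move=> j jT /=; rewrite Ti //; apply: onT.
- apply: (near_impl (near_and hnear (near_sqdist_lt qp))) => x [[xA xO] xi].
  split=> j /=; rewrite !inE; case: eqP => [->|_] //=; by [apply: xA | apply: xO].
- by move=> beta; have [w hw] := indT beta; exists w => j jT /=; rewrite Ti ?hw.
Qed.

Lemma pierce_point_on q A T : pierce_point c r q A T -> i \notin A -> i \notin T ->
  0 < e -> sqdist q p = e ^+ 2 -> (#|T|.+1 < d)%N ->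
  (forall beta bi, exists w,
     (forall j, j \in T -> dot w (q - c j) = beta j) /\ dot w (q - p) = bi) ->
  pierce_point c' r' q A (i |: T).
Proof.
move=> [Td onT hnear indT] iA iT e0 qp Td' ext; split.
- by rewrite cardsU1 iT.
- by move=> j /=; rewrite !inE; case: eqP => [_|_] //= /onT.
- apply: (near_impl hnear) => x [xA xO].
  split=> j /=; rewrite ?inE; case: eqP => [->|_] //=;
    by [rewrite (negbTE iA) | apply: xA | apply: xO].
- move=> beta; have [w [wT wi]] := ext beta (beta i); exists w => j /=.
  by rewrite !inE; case: eqP => [->|_] //= /wT.
Qed.

End AddBall.

Section WellFormed.
Variables (R : realType) (n d : nat).
Implicit Types (c : 'I_n -> 'rV[R]_d) (r : 'I_n -> R) (S T : {set 'I_n}) (x p : 'rV[R]_d).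

Definition spheres c r S x : Prop := forall j, j \in S -> bsphere (c j) (r j) x.

Definition well_formed_alive c r : Prop :=
  (forall S, S \subset [set j | 0 < r j] -> (1 <= #|S| <= d)%N ->
     (forall x, ~ spheres c r S x) \/ is_dim_sphere (d - #|S|) (spheres c r S))
  /\ (forall S, S \subset [set j | 0 < r j] -> #|S| = d.+1 ->
       forall x, ~ spheres c r S x).

Lemma spheres_update_notin c r i p e S : i \notin S -> forall x,
  spheres [eta c with i |-> p] [eta r with i |-> e] S x <-> spheres c r S x.
Proof.
move=> iS x; have ji j : j \in S -> (j == i) = false.
  by move=> jS; apply: contraNF iS => /eqP <-.
by split=> h j jS; move: (h j jS); rewrite /bsphere /= ji.
Qed.

Lemma spheres_update_in c r i p e S : i \in S -> forall x,
  spheres [eta c with i |-> p] [eta r with i |-> e] S x <->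
  spheres c r (S :\ i) x /\ sqdist x p = e ^+ 2.
Proof.
move=> iS x; split=> [h|[h xp] j jS].
  split=> [j|]; last by have := h i iS; rewrite /bsphere /= eqxx.
  by rewrite !inE => /andP [ji jS]; have := h j jS; rewrite /bsphere /= (negbTE ji).
by rewrite /bsphere /=; case: eqP => [// | /eqP ji]; apply: h; rewrite !inE ji.
Qed.

Lemma well_formed_add_sphere c r i p e T :
  well_formed_alive c r -> 0 < e -> (#|T| < d)%N ->
  (forall S, S \subset T -> (0 < #|S| < d)%N ->
     is_dim_sphere (d - #|S|.+1) (fun x => spheres c r S x /\ sqdist x p = e ^+ 2)) ->
  (forall x, sqdist x p = e ^+ 2 ->
     forall j, 0 < r j -> bsphere (c j) (r j) x -> j \in T) ->
  well_formed_alive [eta c with i |-> p] [eta r with i |-> e].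
Proof.
move=> [wf1 wf2] e0 Td cut far.
set c' := [eta c with i |-> p]; set r' := [eta r with i |-> e].
have alive S j : S \subset [set j | 0 < r' j] -> j \in S -> j != i -> 0 < r j.
  by move=> /subsetP SA jS ji; have := SA j jS; rewrite inE /r' /= (negbTE ji).
have aliveS S : i \notin S -> S \subset [set j | 0 < r' j] -> S \subset [set j | 0 < r j].
  move=> iS SA; apply/subsetP => j jS; rewrite inE (alive S) //.
  by apply: contraNneq iS => <-.
have gone S x : i \in S -> S \subset [set j | 0 < r' j] -> ~~ (S :\ i \subset T) ->
    ~ spheres c' r' S x.
  move=> iS SA /subsetPn [j]; rewrite !inE => /andP [ji jS] jT.
  move/(spheres_update_in c r p e iS) => [h xp]; apply: (negP jT).
  by apply: (far x xp j (alive S j SA jS ji)); apply: h; rewrite !inE ji.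
split=> S SA.
  move=> Sd; have [iS | iS] := boolP (i \in S); last first.
    case: (wf1 S (aliveS S iS SA) Sd) => [none | sph].
      by left=> x /(spheres_update_notin c r p e iS) /none.
    by right; apply: is_dim_sphere_ext sph => x; rewrite spheres_update_notin.
  have [ST | ST] := boolP (S :\ i \subset T); last by left=> x; apply: gone.
  right; have cS : #|S| = #|S :\ i|.+1 by rewrite (cardsD1 i S) iS.
  have [S0 | S0] := eqVneq (S :\ i) set0.
    have d0 : (0 < d)%N by case/andP: Sd; apply: leq_trans.
    exists p, e, fullv; split=> //.
      by rewrite dimvf /dim /= mul1n cS S0 cards0 subn1 prednK.
    move=> x; rewrite memvf spheres_update_in // S0; split=> [[_ ->] | [_ ->]] //.
    by split=> // j; rewrite inE.
  rewrite cS; apply: is_dim_sphere_ext (cut _ ST _) => [x | ].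
    by rewrite spheres_update_in.
  by rewrite lt0n cards_eq0 S0 -ltnS -cS; case/andP: Sd.
move=> Sd x; have [iS | iS] := boolP (i \in S).
  apply: gone => //; apply/negP => /subset_leq_card.
  by move: Sd; rewrite (cardsD1 i S) iS add1n => -[->]; rewrite leqNgt Td.
by move/(spheres_update_notin c r p e iS); apply: wf2 (aliveS S iS SA) Sd x.
Qed.

End WellFormed.

Lemma interval_setsU1 (n : nat) (i : 'I_n) (s t g : {set 'I_n}) :
  i \notin t -> s \subset t ->
  (g \in interval_sets (i |: s) (i |: t)) = (i \in g) && (g :\ i \in interval_sets s t).
Proof.
move=> it st; have iNs : i \notin s by apply: contra it; apply: (subsetP st).
by rewrite !inE subUset sub1set subsetD1 iNs subDset andbT andbA.
Qed.

Section AddNeuron.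
Variables (R : realType) (n d : nat).
Implicit Types (U V : 'I_n -> 'rV[R]_d -> Prop) (C : {set {set 'I_n}}).
Implicit Types (s t g : {set 'I_n}).

Lemma atom_update U i (W : 'rV[R]_d -> Prop) : (forall x, ~ U i x) -> forall g x,
  atom (fun j => if j == i then W else U j) g x <-> atom U (g :\ i) x /\ (i \in g <-> W x).
Proof.
move=> Ui g x; split=> [[gin gout] | [[gin gout] iW]].
  split; last first.
    by split=> [/gin | Wx]; rewrite ?eqxx //; apply/negPn/negP => /gout; rewrite eqxx.
  split=> j; rewrite !inE; have [-> | /negbTE ji] := eqVneq j i => //=.
  by move=> jg; have := gin j jg; rewrite ji.
  by move=> jg; have := gout j jg; rewrite ji.
split=> j; have [-> | ji] := eqVneq j i.
- by move=> ig; apply/iW.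
- by move=> jg; apply: gin; rewrite !inE ji.
- by move=> ig /iW; apply/negP.
- by move=> jg; apply: gout; rewrite !inE negb_and jg orbT.
Qed.

Lemma realizes_ext U V C : (forall j x, U j x <-> V j x) -> realizes U C -> realizes V C.
Proof.
move=> UV real g; rewrite -real.
by split=> -[x [gin gout]]; exists x; split=> j jg; try move/UV;
  [apply/UV/gin | apply: gout | apply/UV/gin | apply: gout].
Qed.

Lemma realizes_add_neuron U C i s t (W : 'rV[R]_d -> Prop) :
  realizes U C -> (forall x, ~ U i x) -> i \notin t -> s \subset t ->
  (forall x g, W x -> atom U g x -> g \in interval_sets s t) ->
  (forall g, g \in interval_sets s t -> exists2 x, atom U g x & W x) ->
  (forall g, g \in interval_sets s t -> exists2 x, atom U g x & ~ W x) ->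
  realizes (fun j => if j == i then W else U j) (C :|: interval_sets (i |: s) (i |: t)).
Proof.
move=> real Ui it st inW meetW avoidW g.
have gi (h : {set 'I_n}) : i \notin h -> h :\ i = h.
  by move=> ih; apply/setDidPl; rewrite disjoint_sym disjoints1.
rewrite in_setU interval_setsU1 //; split=> [[x /(atom_update W Ui) [xg iW]] | ].
  have [ig | ig] := boolP (i \in g); first by rewrite (inW x _ (iW.1 ig) xg) orbT.
  by rewrite gi // in xg; apply/orP; left; apply/real; exists x.
case/orP=> [gC | /andP [ig gst]]; last first.
  by have [x xg xW] := meetW _ gst; exists x; apply/(atom_update W Ui).
have ig : i \notin g by have [x [xg _]] := (real g).2 gC; apply/negP => /xg /Ui.
have [x xg xW] : exists2 x, atom U g x & ~ W x.
  have [gst | gst] := boolP (g \in interval_sets s t); first exact: avoidW.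
  have [x xg] := (real g).2 gC; exists x => // Wx.
  by rewrite (inW x g Wx xg) in gst.
exists x; apply/(atom_update W Ui); rewrite gi //; split=> //.
by split=> [/(negP ig) | /xW].
Qed.

End AddNeuron.

Section PiercedRealization.
Variables (R : realType) (n d : nat).
Implicit Types (c : 'I_n -> 'rV[R]_d) (r : 'I_n -> R) (C : {set {set 'I_n}}).
Implicit Types (a b g J K S : {set 'I_n}).

Local Notation balls c r := (fun j => open_ball (c j) (r j)).

(* Radius 0 encodes a neuron whose ball has not been placed yet. *)
Definition pierced_realization C c r : Prop :=
  [/\ forall j, 0 <= r j, realizes (balls c r) C, well_formed_alive c r &
      forall a b, a \subset b -> (#|b :\: a| < d)%N -> interval_sets a b \subset C ->
        exists p, pierce_point c r p a (b :\: a)].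

Lemma del_neuron_notin C i g : g \in del_neuron C i -> i \notin g.
Proof. by case/imsetP=> h _ ->; rewrite setD11. Qed.

Lemma realizes_unused c r C i : realizes (balls c r) C ->
  (forall g, g \in C -> i \notin g) -> forall x, ~ open_ball (c i) (r i) x.
Proof.
move=> real Ci x xi; pose g := [set j | sqdist x (c j) < r j ^+ 2].
have /Ci : g \in C by apply/real; exists x; split=> j; rewrite inE // => /negP.
by rewrite inE xi.
Qed.

Section Step.
Variables (C : {set {set 'I_n}}) (i : 'I_n) (s t : {set 'I_n}) (c : 'I_n -> 'rV[R]_d).
Variables (r : 'I_n -> R) (p : 'rV[R]_d).
Hypotheses (st : s \subset t) (it : i \notin t).
Hypothesis hC : C = del_neuron C i :|: interval_sets (i |: s) (i |: t).
Hypothesis hPR : pierced_realization (del_neuron C i) c r.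
Hypothesis pp : pierce_point c r p s (t :\: s).

Local Notation C0 := (del_neuron C i).
Local Notation T := (t :\: s).

Lemma small_near : small (fun e => forall x, sqdist x p <= e ^+ 2 ->
  (forall g, atom (balls c r) g x -> g \in interval_sets s t) /\
  (forall j, 0 < r j -> bsphere (c j) (r j) x -> j \in T)).
Proof. exact/near_small/near_and/(pierce_point_near_sphere pp)/(pierce_point_near_atom st pp). Qed.

Lemma small_far_atoms : small (fun e => forall g, g \in interval_sets s t ->
  exists2 x, atom (balls c r) g x & e ^+ 2 <= sqdist x p).
Proof.
apply: small_all => g; apply: small_if => gst.
have [x [gx xp _]] := (pierce_point_pierceable st pp g).2 gst 1 ltr01.
by apply: (small_impl (small_sqr_lt (sqdist_gt0 xp))) => e _ ex; exists x => //; apply: ltW.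
Qed.

Lemma small_sphere_cuts : small (fun e => forall S, S \subset T -> (0 < #|S| < d)%N ->
  is_dim_sphere (d - #|S|.+1) (fun x => spheres c r S x /\ sqdist x p = e ^+ 2)).
Proof.
have [_ _ [wf _] _] := hPR; have [_ onT _ _] := pp.
apply: small_all => S; apply: small_if => ST; apply: small_if => /andP [S0 Sd].
have SA : S \subset [set j | 0 < r j].
  by apply/subsetP => j /(subsetP ST) /onT [rj _]; rewrite inE.
have Sp : spheres c r S p by move=> j /(subsetP ST) /onT [].
case: (wf S SA _) => [|/(_ p Sp) [] | sph]; first by rewrite S0 ltnW.
by rewrite -subnSK // in sph; apply: sphere_cut sph Sp.
Qed.

Definition far_points e : Prop := forall a b, a \subset b ->
  (#|b :\: a| < d)%N -> interval_sets a b \subset C0 ->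
  exists2 q, pierce_point c r q a (b :\: a) & e ^+ 2 < sqdist q p.

Lemma small_far_points : small far_points.
Proof.
have [_ _ _ pts] := hPR.
have : small (fun e => forall ab : {set 'I_n} * {set 'I_n}, ab.1 \subset ab.2 ->
    (#|ab.2 :\: ab.1| < d)%N -> interval_sets ab.1 ab.2 \subset C0 ->
    exists2 q, pierce_point c r q ab.1 (ab.2 :\: ab.1) & e ^+ 2 < sqdist q p).
  apply: small_all => -[a b]; apply: small_if => ab; apply: small_if => abd.
  apply: small_if => abC; have [q0 pq0] := pts a b ab abd abC.
  have [q pq qp] := pierce_point_avoid p pq0.
  by apply: (small_impl (small_sqr_lt (sqdist_gt0 qp))) => e _ eq; exists q.
by move/small_impl; apply=> e _ h a b; apply: (h (a, b)).
Qed.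

Definition near_points e : Prop := forall J K, J \subset T -> K \subset T ->
  [disjoint J & K] -> forall u, 0 < u -> u <= e ^+ 2 ->
  exists q, [/\ sqdist q p = u, pierce_point c r q (s :|: K) J &
    forall beta bi, exists w,
      (forall j, j \in J -> dot w (q - c j) = beta j) /\ dot w (q - p) = bi].

Lemma small_near_points : small near_points.
Proof.
have : small (fun e => forall JK : {set 'I_n} * {set 'I_n}, JK.1 \subset T ->
    JK.2 \subset T -> [disjoint JK.1 & JK.2] -> forall u, 0 < u -> u <= e ^+ 2 ->
    exists q, [/\ sqdist q p = u, pierce_point c r q (s :|: JK.2) JK.1 &
      forall beta bi, exists w,
        (forall j, j \in JK.1 -> dot w (q - c j) = beta j) /\ dot w (q - p) = bi]).
  apply: small_all => -[J K]; apply: small_if => JT; apply: small_if => KT.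
  apply: small_if => JK; exact: small_sqr (pierce_point_move pp JT KT JK).
by move/small_impl; apply=> e _ h J K; apply: (h (J, K)).
Qed.

Lemma step_added g : g \in C -> i \in g -> g :\ i \in interval_sets s t.
Proof.
rewrite {1}hC in_setU interval_setsU1 // => /orP [/del_neuron_notin/negbTE -> //|].
by case/andP.
Qed.

Lemma step_pierce_points_old e a b : far_points e -> a \subset b ->
  (#|b :\: a| < d)%N -> interval_sets a b \subset C -> i \notin b ->
  exists q, pierce_point [eta c with i |-> p] [eta r with i |-> e] q a (b :\: a).
Proof.
move=> farP ab abd abC ib; have ia : i \notin a by apply: contra ib; apply: (subsetP ab).
have abC0 : interval_sets a b \subset C0.
  apply/subsetP => g gab; have /negbTE ig : i \notin g.
    by move: gab; rewrite inE => /andP [_ /subsetP gb]; apply: contra ib; apply: gb.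
  by have := subsetP abC g gab; rewrite {1}hC in_setU interval_setsU1 // ig orbF.
have [q pq qp] := farP a b ab abd abC0.
by exists q; apply: pierce_point_out => //; rewrite inE (negbTE ib) andbF.
Qed.

Lemma step_pierce_points_new e a b : 0 < e -> near_points e -> a \subset b ->
  (#|b :\: a| < d)%N -> interval_sets a b \subset C -> i \in b ->
  exists q, pierce_point [eta c with i |-> p] [eta r with i |-> e] q a (b :\: a).
Proof.
move=> e0 nearP ab abd abC ib; have e2 := exprn_gt0 2 e0.
have iNs : i \notin s by apply: contra it; apply: (subsetP st).
have /step_added : i |: a \in C.
  by apply: (subsetP abC); rewrite inE subsetUr subUset sub1set ib ab.
rewrite setU11 inE => /(_ isT) /andP [sia _].
have sa : s \subset a by apply: subset_trans sia _; rewrite subDset.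
have /step_added /(_ ib) : b \in C by apply: (subsetP abC); rewrite inE ab subxx.
rewrite inE => /andP [_ bt].
set J := (b :\: a) :\ i; set K := (a :\ i) :\: s.
have JT : J \subset T.
  apply/subsetP => j; rewrite !inE => /and3P [ji ja jb].
  rewrite (subsetP bt j) ?andbT; last by rewrite !inE ji jb.
  by apply: contra ja; apply: (subsetP sa).
have KT : K \subset T.
  apply/subsetP => j; rewrite !inE => /andP [js /andP [ji ja]].
  by rewrite js (subsetP bt j) // !inE ji (subsetP ab).
have JK : [disjoint J & K].
  by rewrite -setI_eq0; apply/eqP/setP => j; rewrite !inE; case: (j \in a); rewrite ?andbF.
have iJ : i \notin J by rewrite !inE eqxx.
have iK : i \notin s :|: K by rewrite !inE (negbTE iNs) eqxx.
have [ia | ia] := boolP (i \in a).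
  have u0 : 0 < e ^+ 2 / 2 by rewrite divr_gt0.
  have ue : e ^+ 2 / 2 <= e ^+ 2 by rewrite ler_pdivrMr //; lra.
  have [q [qp pq _]] := nearP J K JT KT JK _ u0 ue.
  have -> : b :\: a = J by apply/setP => j; rewrite !inE; case: eqVneq => // ->; rewrite ia.
  have -> : a = i |: (s :|: K).
    apply/setP => j; rewrite !inE; have [-> // | _ /=] := eqVneq j i.
    by case: (boolP (j \in s)) => [/(subsetP sa) ->|].
  by exists q; apply: pierce_point_in => //; rewrite qp ltr_pdivrMr //; lra.
have [q [qp pq ext]] := nearP J K JT KT JK _ e2 (lexx _).
have bai : i \in b :\: a by rewrite inE ia ib.
have -> : b :\: a = i |: J by rewrite setD1K.
have -> : a = s :|: K.
  apply/setP => j; rewrite !inE; have [-> | _ /=] := eqVneq j i.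
    by rewrite (negbTE ia) (negbTE iNs).
  by case: (boolP (j \in s)) => [/(subsetP sa) ->|].
exists q; apply: pierce_point_on => //.
by rewrite -(setD1K bai) cardsU1 iJ in abd.
Qed.

End Step.

Lemma pierced_realization_step C i k' : (k' < d)%N -> is_piercing C i k' ->
  (exists c r, pierced_realization (del_neuron C i) c r) ->
  exists c r, pierced_realization C c r.
Proof.
move=> kd [s [t [st it card_ts sub_st hC]]] [c [r hPR]].
have [r0 real wf pts] := hPR; have Td : (#|t :\: s| < d)%N by rewrite card_ts.
have [p pp] := pts s t st Td sub_st.
have [e e0 [[[[nearP farA] cuts] farP] nearP']] := small_exists (small_and (small_and
  (small_and (small_and (small_near st pp) (small_far_atoms st pp))
  (small_sphere_cuts hPR pp)) (small_far_points p hPR)) (small_near_points pp)).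
exists [eta c with i |-> p], [eta r with i |-> e]; split.
- by move=> j /=; case: eqP => _; [apply: ltW | apply: r0].
- rewrite hC; apply: (realizes_ext _
    (realizes_add_neuron (W := open_ball p e) real _ it st _ _ _)).
  + by move=> j x /=; case: eqP.
  + exact: realizes_unused real (@del_neuron_notin _ _).
  + by move=> x g xp; apply: (nearP x (ltW xp)).1.
  + move=> g gst; have [x [gx _ xp]] := (pierce_point_pierceable st pp g).2 gst e e0.
    by exists x.
  + move=> g gst; have [x gx xp] := farA g gst; exists x => //.
    by rewrite /open_ball ltNge xp.
- apply: (well_formed_add_sphere i wf e0 Td cuts) => x xp.
  by have /nearP [] : sqdist x p <= e ^+ 2 by rewrite xp.
- move=> a b ab abd abC; have [ib | ib] := boolP (i \in b).
    exact: (step_pierce_points_new st it hC e0 nearP' ab abd abC ib).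
  exact: (step_pierce_points_old st it hC farP ab abd abC ib).
Qed.

Lemma pierced_realization_empty : (0 < d)%N ->
  pierced_realization [set set0] (fun _ => 0) (fun _ => 0).
Proof.
have dead S : S \subset [set j | (0 : R) < 0] -> S = set0.
  by move=> /subsetP S0; apply/setP => j; rewrite inE; apply/negP => /S0; rewrite inE ltxx.
move=> d0; split=> //.
- move=> g; rewrite inE; split=> [[x [gin _]] | /eqP ->].
    by apply/eqP/setP => j; rewrite inE; apply/negP => /gin /open_ball0.
  by exists 0; split=> j; rewrite ?inE // => _ /open_ball0.
- by split=> S /dead ->; rewrite cards0.
move=> a b ab _ abC; have [a0 b0] : a = set0 /\ b = set0.
  by split; apply/set1P; apply: (subsetP abC); rewrite inE ab subxx.
exists 0; rewrite a0 b0 setDv; split=> //; first by rewrite cards0.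
- by move=> j; rewrite inE.
- by exists 1 => // x _; split=> j; rewrite ?inE //; left.
- by move=> beta; exists 0 => j; rewrite inE.
Qed.

End PiercedRealization.

Lemma k_ind_pierced_realization (R : realType) (n k : nat) (C : {set {set 'I_n}}) :
  k_ind_pierced k C ->
  exists (c : 'I_n -> 'rV[R]_k.+1) (r : 'I_n -> R), pierced_realization C c r.
Proof.
elim=> [|C' i k' k'k pierce _ IH]; last exact: pierced_realization_step pierce IH.
by exists (fun _ => 0), (fun _ => 0); apply: pierced_realization_empty.
Qed.

Lemma well_formed_alive_balls (R : realType) (n d : nat) (c : 'I_n -> 'rV[R]_d) r :
  (forall j, 0 < r j) -> well_formed_alive c r -> well_formed_balls c r.
Proof.
move=> rpos [wf1 wf2]; have SA (S : {set 'I_n}) : S \subset [set j | 0 < r j].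
  by apply/subsetP => j _; rewrite inE.
by split=> S; [apply: wf1 | apply: wf2].
Qed.

Lemma realizes_radius_gt0 (R : realType) (n d : nat) (C : {set {set 'I_n}})
    (c : 'I_n -> 'rV[R]_d) r :
  (forall j, exists2 g, g \in C & j \in g) -> (forall j, 0 <= r j) ->
  realizes (fun j => open_ball (c j) (r j)) C -> forall j, 0 < r j.
Proof.
move=> cover r0 real j; have [g gC jg] := cover j; have [x [xg _]] := (real g).2 gC.
by rewrite lt_def r0 andbT; apply: contraPneq (xg j jg) => ->; apply: open_ball0.
Qed.

Theorem lemma3p4 (R : realType) (n k : nat) (C : {set {set 'I_n}}) :
  code_conventions C -> k_ind_pierced k C ->
  exists (c : 'I_n -> 'rV[R]_k.+1) (r : 'I_n -> R),
    [/\ forall i, 0 < r i,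
        realizes (fun i => open_ball (c i) (r i)) C,
        well_formed_balls c r
      & forall a b : {set 'I_n}, a \subset b -> (#|b :\: a| <= k)%N ->
          interval_sets a b \subset C ->
          exists p, pierceable_at (fun i => open_ball (c i) (r i)) a b p].
Proof.
move=> [_ cover _] /(k_ind_pierced_realization R) [c [r [r0 real wf pts]]].
have rpos := realizes_radius_gt0 cover r0 real.
exists c, r; split=> //; first exact: well_formed_alive_balls.
move=> a b ab abk abC; have [p pp] := pts a b ab abk abC.
by exists p; apply: pierce_point_pierceable.
Qed.
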